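(* Let $k$ be a field and let $A$ and $B$ be connected graded $k$-algebras that are finitely generated in degree $1$. If $A\cong B$ as ungraded $k$-algebras, then $A\cong B$ as graded $k$-algebras.
   Context: All algebras are associative unital $k$-algebras. A graded algebra $A=\bigoplus_{i\ge 0}A_i$ is connected graded if $A_0=k$; it is finitely generated in degree $1$ if $\dim_k A_1<\infty$ and $A$ is generated as an algebra by $A_1$. *)

From HB Require Import structures.
From mathcomp Require Import all_boot all_order all_algebra.
Set Implicit Arguments. Unset Strict Implicit. Unset Printing Implicit Defensive.
Import GRing.Theory.
Local Open Scope ring_scope.

Inductive gen_by (k : fieldType) (A : algType k) (S : A -> Prop) : A -> Prop :=
  | gen_in  : forall a, S a -> gen_by S a
  | gen_one : gen_by S 1
  | gen_add : forall a b, gen_by S a -> gen_by S b -> gen_by S (a + b)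
  | gen_scale : forall (c : k) a, gen_by S a -> gen_by S (c *: a)
  | gen_mul : forall a b, gen_by S a -> gen_by S b -> gen_by S (a * b).

(* deg i a  means  a \in A_i.  A grading A = \bigoplus_{i >= 0} A_i. *)
Definition is_grading (k : fieldType) (A : algType k) (deg : nat -> A -> Prop) :=
  [/\
      (forall i, deg i 0),
      (forall i (c : k) a b, deg i a -> deg i b -> deg i (c *: a + b)),
      (forall a : A, exists n (s : 'I_n -> A),
          (forall i : 'I_n, deg i (s i)) /\ a = \sum_(i < n) s i),
      (forall n (s : 'I_n -> A), (forall i : 'I_n, deg i (s i)) ->
          \sum_(i < n) s i = 0 -> forall i, s i = 0)
    &
      (forall i j a b, deg i a -> deg j b -> deg (i + j)%N (a * b))].

Definition cgraded_fg1 (k : fieldType) (A : algType k) (deg : nat -> A -> Prop) :=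
  [/\ is_grading deg,
      (forall a : A, deg 0%N a <-> exists c : k, a = c%:A),
      (exists g : seq A, (forall x, x \in g -> deg 1%N x) /\
         forall a, deg 1%N a -> exists c : 'I_(size g) -> k,
            a = \sum_(i < size g) c i *: g`_i)
    &
      (forall a : A, gen_by (deg 1%N) a)].

Definition alg_iso (k : fieldType) (A B : algType k) (f : A -> B) :=
  [/\ (forall (c : k) x y, f (c *: x + y) = c *: f x + f y),
      (forall x y, f (x * y) = f x * f y),
      f 1 = 1
    & bijective f].

Definition graded_alg_iso (k : fieldType) (A B : algType k)
    (degA : nat -> A -> Prop) (degB : nat -> B -> Prop) (f : A -> B) :=
  alg_iso f /\ (forall i a, degA i a <-> degB i (f a)).

From HB Require Import structures.
From mathcomp Require Import all_boot all_order all_algebra.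
From mathcomp Require Import zify.
From Stdlib Require Import ClassicalEpsilon Classical.
Set Implicit Arguments. Unset Strict Implicit. Unset Printing Implicit Defensive.
Import GRing.Theory.
Local Open Scope ring_scope.

(* Let f : A -> B be an algebra isomorphism, and write A_{<n} and B_{>=n} for
   the sums of the homogeneous components of degree < n, resp. >= n.  As B is
   connected, every x in A_1 is a scalar plus an element of A_{<=1} mapped into
   B_{>=1}; since A is generated by A_1, products of such elements give
   A = A_{<n} + f^-1(B_{>=n}), and symmetrically B = B_{<n} + f(A_{>=n}).  Together
   these make v |-> trunc_n (f^-1 (trunc_n (f v))) a surjective endomorphism of
   the finite-dimensional space A_{<n}, so it is injective and the first sum is
   direct.  For x in A_i, the degree-i component of f h, where h is the component
   of x in f^-1(B_{>=i}), defines the associated graded map gr f : A -> B, which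
   is a graded algebra isomorphism. *)

Lemma sum_scale_delta (k : fieldType) (V : lmodType k) n (e : 'I_n -> V) i :
  \sum_j (j == i)%:R *: e j = e i.
Proof.
by rewrite (bigD1 i) //= eqxx scale1r big1 ?addr0 // => j /negPf->; rewrite scale0r.
Qed.

Section FiniteSpan.
Variables (k : fieldType) (V : lmodType k) (P : V -> Prop).

Definition spanned_by n (e : 'I_n -> V) :=
  forall v, P v <-> exists c : 'I_n -> k, v = \sum_i c i *: e i.

Definition lin_indep n (e : 'I_n -> V) :=
  forall c : 'I_n -> k, \sum_i c i *: e i = 0 -> forall i, c i = 0.

Lemma spanned_by_mem n (e : 'I_n -> V) : spanned_by e -> forall i, P (e i).
Proof. by move=> spe i; apply/spe; exists (fun j => (j == i)%:R); rewrite sum_scale_delta. Qed.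

Lemma spanned_by_drop n (e : 'I_n.+1 -> V) (c : 'I_n.+1 -> k) i :
  spanned_by e -> \sum_j c j *: e j = 0 -> c i != 0 -> spanned_by (fun j => e (lift i j)).
Proof.
move=> spe ce0 ci0 v; split.
- have ei : e i = \sum_j (- (c i)^-1 * c (lift i j)) *: e (lift i j).
    move/eqP: ce0; rewrite (bigD1_ord i) //= addrC addr_eq0 => /eqP ce.
    under eq_bigr do rewrite -scalerA.
    by rewrite -scaler_sumr ce scalerN scaleNr opprK scalerA mulVf ?scale1r.
  case/spe => a ->; exists (fun j => a i * (- (c i)^-1 * c (lift i j)) + a (lift i j)).
  rewrite (bigD1_ord i) //= ei scaler_sumr -big_split /=.
  by apply: eq_bigr => j _; rewrite scalerA scalerDl.
- case=> a ->; apply/spe.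
  exists (fun j => if unlift i j is Some j' then a j' else 0).
  rewrite (bigD1_ord i) //= unlift_none scale0r add0r.
  by apply: eq_bigr => j _; rewrite liftK.
Qed.

Lemma spanned_by_basis n (e : 'I_n -> V) :
  spanned_by e -> exists d (E : 'I_d -> V), spanned_by E /\ lin_indep E.
Proof.
elim: n e => [|n IHn] e spe; first by exists 0%N, e; split=> // c _ [].
case: (classic (lin_indep e)) => [inde|]; first by exists n.+1, e.
move=> /not_all_ex_not[c /not_all_ex_not[ce0 /not_all_ex_not[i /eqP ci0]]].
exact: IHn (spanned_by_drop spe ce0 ci0).
Qed.

Lemma spanned_by_surj_inj n (e : 'I_n -> V) (g : {linear V -> V}) :
  spanned_by e -> (forall v, P v -> P (g v)) -> (forall v, P v -> exists2 u, P u & g u = v) ->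
  forall u, P u -> g u = 0 -> u = 0.
Proof.
move=> /spanned_by_basis[d [E [spE indE]]] gP g_onto.
have /fin_all_exists[m gE] : forall i, exists r : 'I_d -> k, g (E i) = \sum_j r j *: E j.
  by move=> i; apply/spE/gP/(spanned_by_mem spE).
have /fin_all_exists[C EC] : forall i, exists r : 'I_d -> k, E i = g (\sum_j r j *: E j).
  by move=> i; case: (g_onto _ (spanned_by_mem spE i)) => _ /spE[r ->] <-; exists r.
have g_comb (a : 'I_d -> k) : g (\sum_j a j *: E j) = \sum_l (\sum_j a j * m j l) *: E l.
  rewrite linear_sum; under eq_bigr do rewrite linearZ /= gE scaler_sumr.
  rewrite exchange_big /=; apply: eq_bigr => l _; rewrite scaler_suml.
  by apply: eq_bigr => j _; rewrite scalerA.
(* In the basis E, the matrix m of g has the left inverse C, so it is invertible. *)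
have CM : \matrix_(i, j) C i j *m \matrix_(i, j) m i j = 1%:M.
  apply/matrixP => i l; rewrite mxE [RHS]mxE.
  have /indE/(_ l)/eqP : \sum_l ((\sum_j C i j * m j l) - (i == l)%:R) *: E l = 0.
    under eq_bigr do rewrite scalerBl.
    rewrite sumrB -g_comb -EC; under [X in _ - X]eq_bigr do rewrite eq_sym.
    by rewrite sum_scale_delta subrr.
  by rewrite subr_eq0 => /eqP <-; apply: eq_bigr => j _; rewrite !mxE.
move=> _ /spE[a ->]; rewrite g_comb => /indE a_m0.
have a0 : \row_j a j = 0.
  rewrite -[\row_j a j]mulmx1 -(mulmx1C CM) mulmxA.
  have -> : \row_j a j *m \matrix_(i, j) m i j = 0.
    apply/rowP => l; rewrite mxE [RHS]mxE -[RHS](a_m0 l).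
    by apply: eq_bigr => j _; rewrite !mxE.
  by rewrite mul0mx.
by rewrite big1 // => j _; move/rowP: a0 => /(_ j); rewrite !mxE => ->; rewrite scale0r.
Qed.

End FiniteSpan.

Lemma big_ord_zero_tail (V : nmodType) (s : nat -> V) n m :
  (forall i, (n <= i)%N -> s i = 0) -> (n <= m)%N ->
  \sum_(i < m) s i = \sum_(i < n) s i.
Proof.
move=> s0 nm; rewrite -!(big_mkord xpredT) (@big_cat_nat _ _ _ n 0 m _ _ (leq0n n) nm) /=.
by rewrite [X in _ + X]big1_seq ?addr0 // => i /andP[_]; rewrite mem_iota => /andP[/s0].
Qed.

Section Grading.
Variables (k : fieldType) (A : algType k) (deg : nat -> A -> Prop).
Hypothesis gradA : is_grading deg.

Lemma deg0 i : deg i 0. Proof. by case: gradA. Qed.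
Lemma degL i c a b : deg i a -> deg i b -> deg i (c *: a + b).
Proof. by case: gradA => _ degL _ _ _; apply: degL. Qed.
Lemma degZ i c a : deg i a -> deg i (c *: a).
Proof. by move=> ha; have := degL c ha (deg0 i); rewrite addr0. Qed.
Lemma degB i a b : deg i a -> deg i b -> deg i (a - b).
Proof. by move=> ha hb; rewrite -scaleN1r addrC; apply: degL. Qed.
Lemma degM i j a b : deg i a -> deg j b -> deg (i + j) (a * b).
Proof. by case: gradA => _ _ _ _; apply. Qed.

Definition hdecomp (a : A) (s : nat -> A) n :=
  [/\ forall i, deg i (s i), forall i, (n <= i)%N -> s i = 0 & a = \sum_(i < n) s i].

Lemma hdecomp_exists a : exists s n, hdecomp a s n.
Proof.
case: gradA => _ _ /(_ a)[n [s [degs ->]]] _ _.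
exists (fun j => if insub j is Some i then s i else 0), n; split.
- by move=> j; case: insubP => [i _ <-|_]; [exact: degs | exact: deg0].
- by move=> j nj; case: insubP => [i /= |//]; rewrite ltnNge nj.
- by apply: eq_bigr => i _; rewrite valK.
Qed.

Lemma hdecomp_uniq a s n t m : hdecomp a s n -> hdecomp a t m -> s =1 t.
Proof.
case=> degs s0 ->{a} [degt t0 /eqP]; set N := maxn n m.
rewrite -(big_ord_zero_tail s0 (leq_maxl n m)) -(big_ord_zero_tail t0 (leq_maxr n m)).
rewrite -subr_eq0 -sumrB => /eqP st0 i.
case: (ltnP i N) => [iN|]; last by rewrite geq_max => /andP[/s0-> /t0->].
case: gradA => _ _ _ /(_ N (fun j : 'I_N => s j - t j)) dsum _.
by apply/eqP; rewrite -subr_eq0; apply/eqP/(dsum _ st0 (Ordinal iN)) => j; apply: degB.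
Qed.

Definition hcomp i a := proj1_sig (constructive_indefinite_description _ (hdecomp_exists a)) i.

Lemma hcompP a : exists n, hdecomp a (hcomp^~ a) n.
Proof. by rewrite /hcomp; case: constructive_indefinite_description. Qed.

Lemma hcomp_uniq a s n : hdecomp a s n -> forall i, hcomp i a = s i.
Proof. by case: (hcompP a) => m /hdecomp_uniq; apply. Qed.

Lemma hcomp_deg i a : deg i (hcomp i a).
Proof. by case: (hcompP a) => n []. Qed.

Lemma hcompL i : linear (hcomp i).
Proof.
move=> c a b; case: (hcompP a) => n [da a0 ea]; case: (hcompP b) => m [db b0 eb].
pose s j := c *: hcomp j a + hcomp j b.
apply: (@hcomp_uniq _ s (maxn n m)) => {i}; split.
- by move=> i; apply: degL.
- by move=> i; rewrite /s geq_max => /andP[/a0-> /b0->]; rewrite scaler0 addr0.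
rewrite big_split /= -scaler_sumr (big_ord_zero_tail a0 (leq_maxl n m)).
by rewrite (big_ord_zero_tail b0 (leq_maxr n m)) -ea -eb.
Qed.

HB.instance Definition _ i := GRing.isLinear.Build k A A *:%R (hcomp i) (@hcompL i).

Lemma hcomp_hom d x : deg d x -> forall i, hcomp i x = if i == d then x else 0.
Proof.
move=> dx; apply: (hcomp_uniq (n := d.+1)); split.
- by move=> i; case: eqP => [->|_]; [|exact: deg0].
- by move=> i; case: eqP => [->|//]; rewrite ltnn.
- rewrite (bigD1 ord_max) //= eqxx big1 ?addr0 // => j.
  by rewrite -val_eqE /= => /negPf ->.
Qed.

Lemma hcomp_id d x : deg d x -> hcomp d x = x.
Proof. by move/hcomp_hom/(_ d); rewrite eqxx. Qed.

Lemma hcomp_bound a : exists n, forall i, (n <= i)%N -> hcomp i a = 0.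
Proof. by case: (hcompP a) => n [_ a0 _]; exists n. Qed.

Lemma hcomp_sumE a n : (forall i, (n <= i)%N -> hcomp i a = 0) -> a = \sum_(i < n) hcomp i a.
Proof.
move=> a0; case: (hcompP a) => m [_ a0' {1}->].
by rewrite -(big_ord_zero_tail a0' (leq_maxl m n)) (big_ord_zero_tail a0 (leq_maxr m n)).
Qed.

Lemma hcomp_inj a b : (forall i, hcomp i a = hcomp i b) -> a = b.
Proof.
move=> eab; case: (hcomp_bound a) => n a0; case: (hcomp_bound b) => m b0.
rewrite (hcomp_sumE a0) (hcomp_sumE b0) -(big_ord_zero_tail a0 (leq_maxl n m)).
by rewrite -(big_ord_zero_tail b0 (leq_maxr n m)); apply: eq_bigr => i _; rewrite eab.
Qed.

Lemma hcomp_mul_eq0 a b e :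
  (forall i j, (i + j)%N = e -> hcomp i a * hcomp j b = 0) -> hcomp e (a * b) = 0.
Proof.
move=> ab0; case: (hcomp_bound a) => n a0; case: (hcomp_bound b) => m b0.
rewrite (hcomp_sumE a0) (hcomp_sumE b0) mulr_suml raddf_sum big1 // => i _.
rewrite mulr_sumr raddf_sum big1 // => j _ /=.
rewrite (hcomp_hom (degM (hcomp_deg i a) (hcomp_deg j b))).
by case: eqP => // ije; apply: ab0.
Qed.

Definition trunc n a := \sum_(j < n) hcomp j a.

Lemma truncL n : linear (trunc n).
Proof.
by move=> c a b; rewrite /trunc scaler_sumr -big_split; apply: eq_bigr => j _; rewrite linearP.
Qed.

HB.instance Definition _ n := GRing.isLinear.Build k A A *:%R (trunc n) (@truncL n).

Lemma hcomp_trunc n a i : hcomp i (trunc n a) = if (i < n)%N then hcomp i a else 0.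
Proof.
rewrite raddf_sum /=; case: ifP => [i_lt_n|i_ge_n].
  rewrite (bigD1 (Ordinal i_lt_n)) //= (hcomp_id (hcomp_deg i a)) big1 ?addr0 // => j.
  by rewrite -val_eqE /= (hcomp_hom (hcomp_deg j a)) eq_sym => /negPf->.
rewrite big1 // => j _; rewrite (hcomp_hom (hcomp_deg j a)).
by case: eqP => // ij; move: (ltn_ord j); rewrite -ij i_ge_n.
Qed.

(* [below n a] means a \in A_{<n}, and [above n a] means a \in A_{>=n}. *)
Definition below n a := trunc n a = a.
Definition above n a := trunc n a = 0.

Lemma belowP n a : below n a <-> forall j, (n <= j)%N -> hcomp j a = 0.
Proof.
split=> [<- j nj | a0]; first by rewrite hcomp_trunc ltnNge nj.
by apply: hcomp_inj => j; rewrite hcomp_trunc; case: ltnP => // /a0->.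
Qed.

Lemma aboveP n a : above n a <-> forall j, (j < n)%N -> hcomp j a = 0.
Proof.
split=> [a0 j jn | a0]; first by move: (hcomp_trunc n a j); rewrite a0 raddf0 jn.
by rewrite /above /trunc big1 // => j _; apply: a0.
Qed.

Lemma below_bound a : exists n, below n a.
Proof. by have [n a0] := hcomp_bound a; exists n; apply/belowP. Qed.

Lemma below0 n : below n 0. Proof. exact: raddf0. Qed.
Lemma above0 n : above n 0. Proof. exact: raddf0. Qed.
Lemma belowL n c a b : below n a -> below n b -> below n (c *: a + b).
Proof. by rewrite /below linearP /= => -> ->. Qed.
Lemma aboveL n c a b : above n a -> above n b -> above n (c *: a + b).
Proof. by rewrite /above linearP /= => -> ->; rewrite scaler0 addr0. Qed.
Lemma belowD n a b : below n a -> below n b -> below n (a + b).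
Proof. by rewrite /below raddfD /= => -> ->. Qed.
Lemma belowB n a b : below n a -> below n b -> below n (a - b).
Proof. by rewrite /below raddfB /= => -> ->. Qed.
Lemma aboveB n a b : above n a -> above n b -> above n (a - b).
Proof. by rewrite /above raddfB /= => -> ->; rewrite subr0. Qed.

Lemma trunc_below n a : below n (trunc n a).
Proof. by apply/belowP => j nj; rewrite hcomp_trunc ltnNge nj. Qed.

Lemma below_mono n m a : (n <= m)%N -> below n a -> below m a.
Proof. by move=> nm /belowP a0; apply/belowP => j mj; apply: a0 (leq_trans nm mj). Qed.

Lemma above_mono n m a : (m <= n)%N -> above n a -> above m a.
Proof. by move=> mn /aboveP a0; apply/aboveP => j jm; apply: a0 (leq_trans jm mn). Qed.

Lemma deg_below d x : deg d x -> below d.+1 x.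
Proof.
move/hcomp_hom=> dx; apply/belowP => j dj.
by rewrite dx; case: eqP dj => // ->; rewrite ltnn.
Qed.

Lemma deg_above d x : deg d x -> above d x.
Proof.
move/hcomp_hom=> dx; apply/aboveP => j jd.
by rewrite dx (ltn_eqF jd).
Qed.

Lemma below_mul n m a b : below n a -> below m b -> below (n + m).-1 (a * b).
Proof.
move=> /belowP a0 /belowP b0; apply/belowP => e le_e; apply: hcomp_mul_eq0 => i j ije.
by case: (leqP n i) => [/a0->|lt_in]; rewrite ?mul0r // b0 ?mulr0 //; lia.
Qed.

Lemma above_mul n m a b : above n a -> above m b -> above (n + m) (a * b).
Proof.
move=> /aboveP a0 /aboveP b0; apply/aboveP => e lt_e; apply: hcomp_mul_eq0 => i j ije.
by case: (ltnP i n) => [/a0->|le_ni]; rewrite ?mul0r // b0 ?mulr0 //; lia.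
Qed.

Lemma hcomp_mul_above n m u v : above n u -> above m v ->
  hcomp (n + m) (u * v) = hcomp n u * hcomp m v.
Proof.
move=> u0 v0.
have above_rest d x : above d x -> above d.+1 (x - hcomp d x).
  move=> /aboveP x0; apply/aboveP => j; rewrite ltnS leq_eqVlt => /orP[/eqP->|jd].
    by rewrite raddfB /= (hcomp_id (hcomp_deg d x)) subrr.
  by rewrite raddfB /= (hcomp_hom (hcomp_deg d x)) (ltn_eqF jd) x0 ?subrr.
have -> : u * v = hcomp n u * hcomp m v +
    (hcomp n u * (v - hcomp m v) + (u - hcomp n u) * v).
  by rewrite mulrBr mulrBl addrA [hcomp n u * _ + _]addrC subrK addrC subrK.
rewrite !raddfD /= hcomp_id; last exact: degM (hcomp_deg _ _) (hcomp_deg _ _).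
have /aboveP-> := above_mul (deg_above (hcomp_deg n u)) (above_rest _ _ v0); last by rewrite addnS.
by have /aboveP-> := above_mul (above_rest _ _ u0) v0; rewrite ?addSn // !addr0.
Qed.

End Grading.

Inductive span (k : fieldType) (V : lmodType k) (S : V -> Prop) : V -> Prop :=
  | span_gen a : S a -> span S a
  | span0 : span S 0
  | spanL (c : k) a b : span S a -> span S b -> span S (c *: a + b).

Section Span.
Variables (k : fieldType) (V : lmodType k) (S : V -> Prop).

Lemma spanD a b : span S a -> span S b -> span S (a + b).
Proof. by move=> sa sb; have := spanL 1 sa sb; rewrite scale1r. Qed.

Lemma spanZ c a : span S a -> span S (c *: a).
Proof. by move=> sa; have := spanL c sa (span0 S); rewrite addr0. Qed.

Lemma span_sum n (F : 'I_n -> V) : (forall i, span S (F i)) -> span S (\sum_i F i).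
Proof. by move=> sF; elim/big_ind: _ => //; [exact: span0 | exact: spanD]. Qed.

End Span.

Lemma span_seq_coef (k : fieldType) (V : lmodType k) (s : seq V) a :
  span (fun x => x \in s) a -> exists c : 'I_(size s) -> k, a = \sum_i c i *: s`_i.
Proof.
elim=> [x xs||c x y _ [cx ->] _ [cy ->]].
- have xi : (index x s < size s)%N by rewrite index_mem.
  exists (fun i => (i == Ordinal xi)%:R).
  by rewrite sum_scale_delta /= nth_index.
- by exists (fun _ => 0); rewrite big1 // => i _; rewrite scale0r.
- exists (fun i => c * cx i + cy i); rewrite scaler_sumr -big_split.
  by apply: eq_bigr => i _; rewrite scalerA scalerDl.
Qed.

Lemma span_mul (k : fieldType) (A : algType k) (S : A -> Prop) a b :
  (forall x y, S x -> S y -> S (x * y)) -> span S a -> span S b -> span S (a * b).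
Proof.
move=> mulS; elim=> [x Sx|| c x y _ IHx _ IHy] sb.
- elim: sb => [y Sy||c y z _ IHy _ IHz]; first exact/span_gen/mulS.
    by rewrite mulr0; apply: span0.
  by rewrite mulrDr -scalerAr; apply: spanL.
- by rewrite mul0r; apply: span0.
- by rewrite mulrDl -scalerAl; apply: spanL; [apply: IHx | apply: IHy].
Qed.

Lemma gen_by_span (k : fieldType) (A : algType k) (S T : A -> Prop) a :
  (forall x y, T x -> T y -> T (x * y)) -> T 1 -> (forall x, S x -> span T x) ->
  gen_by S a -> span T a.
Proof.
move=> mulT T1 ST; elim=> [x /ST //||x y _ ? _ ?|c x _ ?|x y _ ? _ ?].
- exact: span_gen.
- exact: spanD.
- exact: spanZ.
- exact: span_mul.
Qed.

Section Decomposition.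
Variables (k : fieldType) (A B : algType k) (degA : nat -> A -> Prop) (degB : nat -> B -> Prop).
Hypotheses (gradA : is_grading degA) (gradB : is_grading degB).
Hypotheses (oneA : degA 0 1) (genA : forall a : A, gen_by (degA 1) a).
Hypothesis connB : forall b : B, degB 0 b <-> exists c : k, b = c%:A.
Variable f : {lrmorphism A -> B}.

(* Elements whose degree f does not lower; they form a multiplicative set spanning A. *)
Definition balanced a := exists t, below gradA t.+1 a /\ above gradB t (f a).

Lemma balancedM a b : balanced a -> balanced b -> balanced (a * b).
Proof.
case=> t [lo_a hi_a] [s [lo_b hi_b]]; exists (t + s)%N; split.
- by have := below_mul lo_a lo_b; rewrite addSn addnS.
- by rewrite rmorphM; apply: above_mul.
Qed.

Lemma balanced1 : balanced 1.
Proof. by exists 0%N; split; [exact: (deg_below gradA oneA) | apply/aboveP]. Qed.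

Lemma deg1_span_balanced x : degA 1 x -> span balanced x.
Proof.
move=> x1; have /connB[c f0x] := hcomp_deg gradB 0 (f x).
have c1 : degA 0 c%:A by apply: degZ.
have -> : x = (x - c%:A) + c *: 1 by rewrite subrK.
apply: spanD; apply: span_gen; last first.
  by exists 0%N; split; [exact: (deg_below gradA c1) | apply/aboveP].
exists 1%N; split.
- apply: belowB; first exact: (deg_below gradA x1).
  exact: below_mono (deg_below gradA c1).
- apply/aboveP => j; rewrite ltnS leqn0 => /eqP->.
  rewrite !raddfB /= linearZ /= rmorph1 f0x.
  by rewrite (hcomp_id gradB (degZ gradB c _)) ?subrr // connB; exists 1; rewrite scale1r.
Qed.

Lemma below_plus_preim_above n a :
  exists l h, [/\ a = l + h, below gradA n l & above gradB n (f h)].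
Proof.
have : span balanced a by apply: gen_by_span balancedM balanced1 deg1_span_balanced _.
elim=> [x [t [lo_x hi_x]]||c x y _ [lx [hx [-> lo_x hi_x]]] _ [ly [hy [-> lo_y hi_y]]]].
- case: (leqP n t) => [nt|tn].
    by exists 0, x; rewrite add0r; split; [|exact: below0|exact: above_mono hi_x].
  by exists x, 0; rewrite addr0 raddf0; split; [|exact: below_mono lo_x|exact: above0].
- by exists 0, 0; rewrite addr0 raddf0; split; [|exact: below0|exact: above0].
- exists (c *: lx + ly), (c *: hx + hy); split; first by rewrite scalerDr addrACA.
    exact: belowL.
  by rewrite linearP; apply: aboveL.
Qed.

End Decomposition.

Section Monomials.
Variables (k : fieldType) (A : algType k) (deg : nat -> A -> Prop).
Hypotheses (gradA : is_grading deg) (oneA : deg 0 1) (genA : forall a : A, gen_by (deg 1) a).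
Variable gens : seq A.
Hypotheses (gens1 : forall x, x \in gens -> deg 1 x)
  (gens_span : forall a, deg 1 a -> exists c : 'I_(size gens) -> k, a = \sum_i c i *: gens`_i).

Fixpoint monomials t : seq A :=
  if t is t'.+1 then [seq x * w | x <- gens, w <- monomials t'] else [:: 1].

Lemma monomials_deg t x : x \in monomials t -> deg t x.
Proof.
elim: t x => [|t IHt] x /=; first by rewrite inE => /eqP->.
by case/allpairsP => -[y w] /= [yg wt ->]; rewrite -add1n; apply: degM; auto.
Qed.

Lemma monomials_mul t s x y : x \in monomials t -> y \in monomials s -> x * y \in monomials (t + s).
Proof.
elim: t x => [|t IHt] x /=; first by rewrite inE => /eqP->; rewrite mul1r.
case/allpairsP => -[z w] /= [zg wt ->] ys; rewrite -mulrA.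
by apply/allpairsP; exists (z, w * y); split=> //; apply: IHt.
Qed.

Lemma span_monomials a : span (fun x => exists t, x \in monomials t) a.
Proof.
apply: gen_by_span (genA a) => [x y [t xt] [s ys]|| x /gens_span[c ->]].
- by exists (t + s)%N; apply: monomials_mul.
- by exists 0%N; rewrite inE.
apply: span_sum => i; apply/spanZ/span_gen; exists 1%N.
by rewrite -[gens`_i]mulr1; apply/allpairsP; exists (gens`_i, 1); rewrite mem_nth ?inE.
Qed.

Lemma hcomp_span_monomials a j : span (fun x => x \in monomials j) (hcomp gradA j a).
Proof.
elim: (span_monomials a) => [x [t /[dup] xt /monomials_deg/hcomp_hom->]||c x y _ ? _ ?].
- by case: eqP => [->|_]; [apply: span_gen | apply: span0].
- by rewrite raddf0; apply: span0.
- by rewrite linearP; apply: spanL.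
Qed.

Definition monomials_below n := flatten [seq monomials t | t <- iota 0 n].

Lemma below_spanned_by_monomials n :
  spanned_by (below gradA n) (fun i : 'I_(size (monomials_below n)) => (monomials_below n)`_i).
Proof.
have mem_below x : x \in monomials_below n <-> exists2 t, (t < n)%N & x \in monomials t.
  rewrite /monomials_below; split.
    by case/flatten_mapP => t; rewrite mem_iota add0n => /andP[_ tn] xt; exists t.
  by case=> t tn xt; apply/flatten_mapP; exists t; rewrite ?mem_iota ?add0n.
move=> a; split=> [lo_a | [c ->]].
  apply: span_seq_coef; rewrite -lo_a; apply: span_sum => j.
  elim: (hcomp_span_monomials a j) => [x xj||c x y _ ? _ ?]; last exact: spanL.
    by apply/span_gen/mem_below; exists j.
  exact: span0.
elim/big_rec: _ => [|i x _ lo_x]; first exact: below0.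
apply: belowL lo_x; have /mem_below[t tn xt] := mem_nth 0 (ltn_ord i).
exact: below_mono tn (deg_below gradA (monomials_deg xt)).
Qed.

End Monomials.

Lemma deg0_1 (k : fieldType) (A : algType k) (deg : nat -> A -> Prop) :
  (forall a : A, deg 0 a <-> exists c : k, a = c%:A) -> deg 0 1.
Proof. by move=> conn; apply/conn; exists 1; rewrite scale1r. Qed.

Section AssociatedGraded.
Variables (k : fieldType) (A B : algType k) (degA : nat -> A -> Prop) (degB : nat -> B -> Prop).
Hypotheses (gradA : is_grading degA) (gradB : is_grading degB).
Hypotheses (connA : forall a : A, degA 0 a <-> exists c : k, a = c%:A)
  (connB : forall b : B, degB 0 b <-> exists c : k, b = c%:A).
Hypotheses (genA : forall a : A, gen_by (degA 1) a) (genB : forall b : B, gen_by (degB 1) b).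
Variable gensA : seq A.
Hypotheses (gensA1 : forall x, x \in gensA -> degA 1 x)
  (gensA_span : forall a, degA 1 a -> exists c : 'I_(size gensA) -> k, a = \sum_i c i *: gensA`_i).
Variables (f : {lrmorphism A -> B}) (psi : B -> A).
Hypotheses (fK : cancel f psi) (psiK : cancel psi f).

HB.instance Definition _ := GRing.isLinear.Build k B A *:%R psi (can2_linear fK psiK).
HB.instance Definition _ := GRing.isMonoidMorphism.Build B A psi (can2_monoid_morphism fK psiK).

Let oneA := deg0_1 connA.
Let oneB := deg0_1 connB.

Lemma below_preim_above_eq0 n a : below gradA n a -> above gradB n (f a) -> a = 0.
Proof.
(* [roundtrip] is onto A_{<n} by the decompositions of A and of B, hence injective. *)
move=> lo_a hi_fa; pose roundtrip := trunc gradA n \o psi \o trunc gradB n \o f.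
have finA := below_spanned_by_monomials gradA oneA genA gensA1 gensA_span n.
apply: (spanned_by_surj_inj finA (g := roundtrip)) => //.
- by move=> v _; apply: trunc_below.
- move=> v lo_v.
  have [l [h [fv lo_l hi_h]]] := below_plus_preim_above gradB gradA oneB genB connA psi n (f v).
  have [l' [h' [pl lo_l' hi_h']]] := below_plus_preim_above gradA gradB oneA genA connB f n (psi l).
  exists l' => //=.
  have fl' : f l' = l - f h' by rewrite -[l]psiK pl raddfD addrK.
  have pv : psi l = v - psi h by rewrite -[v]fK fv raddfD addrK.
  by rewrite fl' raddfB /= lo_l hi_h' subr0 pv raddfB /= lo_v hi_h subr0.
- by rewrite /= hi_fa !raddf0.
Qed.

Lemma fproj_exists n x : exists h, below gradA n (x - h) /\ above gradB n (f h).
Proof.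
have [l [h [-> lo_l hi_h]]] := below_plus_preim_above gradA gradB oneA genA connB f n x.
by exists h; rewrite addrK.
Qed.

(* The projection of A = A_{<n} (+) f^-1(B_{>=n}) onto its second summand. *)
Definition fproj n x := proj1_sig (constructive_indefinite_description _ (fproj_exists n x)).

Lemma fprojP n x : below gradA n (x - fproj n x) /\ above gradB n (f (fproj n x)).
Proof. by rewrite /fproj; case: constructive_indefinite_description. Qed.

Lemma fproj_uniq n x h : below gradA n (x - h) -> above gradB n (f h) -> fproj n x = h.
Proof.
move=> lo hi; have [lo' hi'] := fprojP n x; apply/eqP; rewrite -subr_eq0; apply/eqP.
apply: (below_preim_above_eq0 (n := n)); last by rewrite raddfB; apply: aboveB.
by have := belowB lo lo'; rewrite opprB addrC addrA subrK addrC.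
Qed.

Lemma fprojL n : linear (fproj n).
Proof.
move=> c x y; have [lo_x hi_x] := fprojP n x; have [lo_y hi_y] := fprojP n y.
apply: fproj_uniq; last by rewrite linearP; apply: aboveL.
by have := belowL c lo_x lo_y; rewrite scalerBr opprD addrACA addrA.
Qed.

HB.instance Definition _ n := GRing.isLinear.Build k A A *:%R (fproj n) (@fprojL n).

Lemma fproj_below d x : degA d x -> below gradA d.+1 (fproj d x).
Proof.
move=> dx; have [lo _] := fprojP d x.
have := belowB (deg_below gradA dx) (below_mono (leqnSn d) lo).
by rewrite opprB addrC subrK.
Qed.

(* The degree-j part of the associated graded map of f. *)
Definition grf j x := hcomp gradB j (f (fproj j x)).

Lemma grfL j : linear (grf j).
Proof. by move=> c x y; rewrite /grf !linearP. Qed.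

HB.instance Definition _ j := GRing.isLinear.Build k A B *:%R (grf j) (@grfL j).

Lemma grf_inj j x : degA j x -> grf j x = 0 -> x = 0.
Proof.
move=> jx grf0; have [lo hi] := fprojP j x.
have hi' : above gradB j.+1 (f (fproj j x)).
  apply/aboveP => i; rewrite ltnS leq_eqVlt => /orP[/eqP-> //|ij].
  by move/aboveP: hi; apply.
have := below_preim_above_eq0 (fproj_below jx) hi'; move: lo => /[swap] ->; rewrite subr0.
by move/belowP/(_ j (leqnn j)); rewrite hcomp_id.
Qed.

Lemma grf_surj i y : degB i y -> exists2 x, degA i x & grf i x = y.
Proof.
move=> iy; have [l [h [py lo_l hi_h]]] :=
  below_plus_preim_above gradA gradB oneA genA connB f i.+1 (psi y).
have fl : f l = y - f h by rewrite -[y]psiK py raddfD addrK.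
exists (hcomp gradA i l); first exact: hcomp_deg.
rewrite /grf; have -> : fproj i (hcomp gradA i l) = l.
  apply: fproj_uniq; last by rewrite fl; apply: aboveB (deg_above gradB iy) (above_mono _ hi_h).
  apply/belowP => j ij; rewrite raddfB /= (hcomp_hom gradA (hcomp_deg gradA i l)).
  case: eqP => [->|/eqP ji]; first by rewrite subrr.
  by move/belowP: lo_l => -> //; rewrite ?subrr // ltn_neqAle eq_sym ji.
by rewrite fl raddfB /= (hcomp_id gradB iy) ((aboveP _ _ _).1 hi_h) ?subr0.
Qed.

Lemma grf_mul i j x y : degA i x -> degA j y -> grf (i + j) (x * y) = grf i x * grf j y.
Proof.
move=> ix jy; have [lo_x hi_x] := fprojP i x; have [lo_y hi_y] := fprojP j y.
rewrite /grf -hcomp_mul_above // -rmorphM; congr (hcomp _ _ (f _)).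
apply: fproj_uniq; last by rewrite rmorphM; apply: above_mul.
have -> : x * y - fproj i x * fproj j y = (x - fproj i x) * y + fproj i x * (y - fproj j y).
  by rewrite mulrBl mulrBr addrA subrK.
apply: belowD; first by have := below_mul lo_x (deg_below gradA jy); rewrite addnS.
by have := below_mul (fproj_below ix) lo_y.
Qed.

Definition hbound a := proj1_sig (constructive_indefinite_description _ (below_bound gradA a)).

Definition grmap a := \sum_(j < hbound a) grf j (hcomp gradA j a).

Lemma grmapE n a : below gradA n a -> grmap a = \sum_(j < n) grf j (hcomp gradA j a).
Proof.
have grf0 m : below gradA m a -> forall j, (m <= j)%N -> grf j (hcomp gradA j a) = 0.
  by move=> /belowP a0 j /a0->; rewrite raddf0.
move=> lo_n; rewrite /grmap /hbound; case: constructive_indefinite_description => m /= lo_m.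
rewrite -(big_ord_zero_tail (grf0 _ lo_m) (leq_maxl m n)).
by rewrite (big_ord_zero_tail (grf0 _ lo_n) (leq_maxr m n)).
Qed.

Lemma grmapL : linear grmap.
Proof.
move=> c a b; have [na lo_a] := below_bound gradA a; have [nb lo_b] := below_bound gradA b.
have {}lo_a := below_mono (leq_maxl na nb) lo_a; have {}lo_b := below_mono (leq_maxr na nb) lo_b.
rewrite (grmapE lo_a) (grmapE lo_b) (grmapE (belowL c lo_a lo_b)).
by rewrite scaler_sumr -big_split; apply: eq_bigr => j _; rewrite !linearP.
Qed.

HB.instance Definition _ := GRing.isLinear.Build k A B *:%R grmap grmapL.

Lemma hcomp_grmap a j : hcomp gradB j (grmap a) = grf j (hcomp gradA j a).
Proof.
have [n lo_a] := below_bound gradA a; rewrite (grmapE lo_a).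
pose s i := grf i (hcomp gradA i a).
have : hdecomp degB (\sum_(i < n) s i) s n.
  split=> [i|i ni|//]; first exact: hcomp_deg.
  by rewrite /s ((belowP _ _ _).1 lo_a i ni) raddf0.
by move/hcomp_uniq->.
Qed.

Lemma grmap_hom d x : degA d x -> grmap x = grf d x.
Proof.
move=> dx; apply: (hcomp_inj (gradA := gradB)) => j.
rewrite hcomp_grmap (hcomp_hom gradA dx) (hcomp_hom gradB (hcomp_deg gradB d _)).
by case: eqP => [->|_]; rewrite ?raddf0.
Qed.

Lemma grmap_inj : injective grmap.
Proof.
move=> a b eab; apply/eqP; rewrite -subr_eq0; apply/eqP; apply: (hcomp_inj (gradA := gradA)) => j.
rewrite raddf0; apply: (grf_inj (hcomp_deg gradA j _)).
by rewrite -hcomp_grmap raddfB /= eab subrr raddf0.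
Qed.

Lemma grmap_surj b : exists a, grmap a = b.
Proof.
have [n lo_b] := below_bound gradB b.
have /fin_all_exists[x /all_and2[degx grfx]] :
    forall j : 'I_n, exists x, degA j x /\ grf j x = hcomp gradB j b.
  by move=> j; have [x ? ?] := grf_surj (hcomp_deg gradB j b); exists x.
exists (\sum_j x j); rewrite raddf_sum -lo_b.
by apply: eq_bigr => j _ /=; rewrite (grmap_hom (degx j)) grfx.
Qed.

Lemma grmap_deg i a : degA i a <-> degB i (grmap a).
Proof.
split=> [ia|ib]; first by rewrite (grmap_hom ia); apply: hcomp_deg.
suff -> : a = hcomp gradA i a by apply: hcomp_deg.
apply: (hcomp_inj (gradA := gradA)) => j; rewrite (hcomp_hom gradA (hcomp_deg gradA i a)).
case: eqP => [-> //|/eqP ji]; apply: (grf_inj (hcomp_deg gradA j a)).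
by rewrite -hcomp_grmap (hcomp_hom gradB ib) (negPf ji).
Qed.

Lemma grmap_mul a b : grmap (a * b) = grmap a * grmap b.
Proof.
have [na lo_a] := below_bound gradA a; have [nb lo_b] := below_bound gradA b.
rewrite -lo_a -lo_b /trunc mulr_suml !raddf_sum mulr_suml; apply: eq_bigr => i _.
rewrite mulr_sumr !raddf_sum mulr_sumr; apply: eq_bigr => j _ /=.
have [ia jb] := (hcomp_deg gradA i a, hcomp_deg gradA j b).
by rewrite (grmap_hom (degM gradA ia jb)) (grmap_hom ia) (grmap_hom jb) grf_mul.
Qed.

Lemma grmap1 : grmap 1 = 1.
Proof.
rewrite (grmap_hom oneA) /grf (@fproj_uniq 0 1 1) ?rmorph1 ?(hcomp_id gradB oneB) //.
  by rewrite subrr; apply: below0.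
exact/aboveP.
Qed.

Lemma grmap_graded_iso : graded_alg_iso degA degB grmap.
Proof.
split; last exact: grmap_deg.
split; [exact: linearP | exact: grmap_mul | exact: grmap1 | ].
pose grmap_inv b := proj1_sig (constructive_indefinite_description _ (grmap_surj b)).
have grmap_invK : cancel grmap_inv grmap.
  by move=> b; rewrite /grmap_inv; case: constructive_indefinite_description.
by exists grmap_inv => // a; apply: grmap_inj; rewrite grmap_invK.
Qed.

End AssociatedGraded.

Theorem theorem1 (k : fieldType) (A B : algType k)
    (degA : nat -> A -> Prop) (degB : nat -> B -> Prop) :
  cgraded_fg1 degA -> cgraded_fg1 degB ->
  (exists f : A -> B, alg_iso f) ->
  exists g : A -> B, graded_alg_iso degA degB g.
Proof.
case=> gradA connA [gensA [gensA1 gensA_span]] genA [gradB connB _ genB].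
case=> f [fL fM f1 [psi fK psiK]].
pose F : {lrmorphism A -> B} := HB.pack f
  (GRing.isLinear.Build k A B *:%R f fL) (GRing.isMonoidMorphism.Build A B f (f1, fM)).
have FK : cancel F psi by [].
eexists; exact: (grmap_graded_iso gradA gradB connA connB genA genB gensA1 gensA_span FK psiK).
Qed.
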